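(* Let $n,p\ge1$ be integers and let $\mathbf{A}^{p+1}_{n+1}$ be as defined in the context. Then: (a) for every $a\in A$, $a\vee\sim(a^p)\ge\langle(0,0),p\rangle$ (i.e. $a\vee\sim(a^p)\in\mathrm{Rad}(\mathbf{A}^{p+1}_{n+1})={\uparrow}\langle(0,0),p\rangle$); (b) if $p\le n$, then for every $a\in A$: $a\not\ge\langle(0,0),p\rangle$ if and only if $a^{n+1}=\bot$; (c) if $n<p$, then $\langle(n-1,0),p-1\rangle^{p-1}=\sim\langle(n-1,0),p-1\rangle$, and for every $a\in A$: $a\not\ge\langle(0,0),p\rangle$ if and only if $a^{p}=\bot$.
   Context: Order $\mathbb{Z}\times\mathbb{Z}$ lexicographically: $(m,r)\preccurlyeq(k,s)$ iff $m<k$, or $m=k$ and $r\le s$; addition/subtraction of pairs is componentwise, and $\min,\max$ of pairs refer to $\preccurlyeq$. For an integer $n\ge1$ let $L^\omega_{n+1}=\{(m,r)\in\mathbb{Z}^2:(0,0)\preccurlyeq(m,r)\preccurlyeq(n,0)\}$ with $x\ast y=\max\{(0,0),x+y-(n,0)\}$ and $x\to y=\min\{(n,0),(n,0)-x+y\}$. For an integer $p\ge1$ let $L_{p+1}=\{0,1,\dots,p\}$ with $\alpha\ast\beta=\max\{0,\alpha+\beta-p\}$. Define $$A=A^{p+1}_{n+1}=\{\langle(m,r),\alpha\rangle:(m,r)\in L^\omega_{n+1},\ \alpha\in\{0,p\}\}\cup\{\langle(m,r),\alpha\rangle:(0,0)\preccurlyeq(m,r)\preccurlyeq(n-1,0),\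 0<\alpha<p\}.$$ Order: $\langle(m,r),\alpha\rangle\le\langle(k,s),\beta\rangle$ iff one of: (o1) $\alpha\neq0$, $\alpha\le\beta$ and $(m,r)\preccurlyeq(k,s)$; (o2) $\alpha=\beta=0$ and $(k,s)\preccurlyeq(m,r)$; (o3) $\alpha=0$, $\beta\ne0$ and $(n-1,0)\preccurlyeq(m+k,r+s)$. $\wedge,\vee$ denote meet and join for $\le$. Put $\bot=\langle(n,0),0\rangle$, $\top=\langle(n,0),p\rangle$. For $a=\langle(m,r),\alpha\rangle$, $b=\langle(k,s),\beta\rangle\in A$ define $a\odot b$ by: (P1) if $\alpha,\beta\ge1$ and $\alpha+\beta>p$: $a\odot b=\langle(m,r)\ast(k,s),\alpha+\beta-p\rangle$; (P2) if $\alpha,\beta\ge1$ and $\alpha+\beta\le p$: $a\odot b=\langle\min\{(n,0),(2n-(m+k+1),-(r+s))\},0\rangle$; (P3) if $\alpha\ge1$, $\beta=0$: $a\odot b=\langle(m,r)\to(k,s),0\rangle$, and if $\alpha=0$, $\beta\ge1$: $a\odot b=\langle(k,s)\to(m,r),0\rangle$; (P4) if $\alpha=\beta=0$: $a\odot b=\langle\min\{(n,0),(m+k+1,r+s)\},0\rangle$. Define $\sim\langle(m,r),\alpha\rangle=\langle(m,r),p-\alpha\rangle$ if $\alpha\in\{0,p\}$, and $\sim\langle(m,r),\alpha\rangle=\langle(n-1-m,-r),p-\alpha\rangle$ if $0<\alpha<p$. Define $a\Rightarrow b=\sim(a\odot\sim b)$. The algebra $\mathbf{A}^{p+1}_{n+1}$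 is $\langle A;\odot,\Rightarrow,\wedge,\vee,\bot,\top\rangle$. Powers: $a^0=\top$, $a^{k+1}=a\odot a^k$. $\mathrm{Rad}$ denotes the intersection of the maximal proper implicative filters (subsets containing $\top$, closed under $\odot$, upward closed, different from $A$). *)

From Stdlib Require Import ZArith Lia Bool.
Open Scope Z_scope.
Open Scope bool_scope.

Definition pair := (Z * Z)%type.

Definition lexleb (x y : pair) : bool :=
  (fst x <? fst y) || ((fst x =? fst y) && (snd x <=? snd y)).
Definition lexle (x y : pair) : Prop := lexleb x y = true.

Definition padd (x y : pair) : pair := (fst x + fst y, snd x + snd y).
Definition psub (x y : pair) : pair := (fst x - fst y, snd x - snd y).
Definition pmin (x y : pair) : pair := if lexleb x y then x else y.
Definition pmax (x y : pair) : pair := if lexleb x y then y else x.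

Section Alg.
Variables n p : nat.
Let N : Z := Z.of_nat n.
Let P : Z := Z.of_nat p.

Definition lstar (x y : pair) : pair := pmax (0, 0) (psub (padd x y) (N, 0)).
Definition limp (x y : pair) : pair := pmin (N, 0) (padd (psub (N, 0) x) y).

(* elements <(m,r),alpha> of A are represented as (m, r, alpha) *)
Definition elt := (pair * Z)%type.

Definition inA (a : elt) : Prop :=
  let (x, al) := a in
  (lexle (0, 0) x /\ lexle x (N, 0) /\ (al = 0 \/ al = P)) \/
  (lexle (0, 0) x /\ lexle x (N - 1, 0) /\ 0 < al < P).

Definition leA (a b : elt) : Prop :=
  let (x, al) := a in let (y, be) := b in
  (al <> 0 /\ al <= be /\ lexle x y) \/
  (al = 0 /\ be = 0 /\ lexle y x) \/
  (al = 0 /\ be <> 0 /\ lexle (N - 1, 0) (padd x y)).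

Definition botA : elt := ((N, 0), 0).
Definition topA : elt := ((N, 0), P).

Definition prodA (a b : elt) : elt :=
  let (x, al) := a in let (y, be) := b in
  if (1 <=? al) && (1 <=? be) then
    if P <? al + be then (lstar x y, al + be - P)
    else (pmin (N, 0) (2 * N - (fst x + fst y + 1), - (snd x + snd y)), 0)
  else if (1 <=? al) then (limp x y, 0)
  else if (1 <=? be) then (limp y x, 0)
  else (pmin (N, 0) (fst x + fst y + 1, snd x + snd y), 0).

Definition negA (a : elt) : elt :=
  let (x, al) := a in
  if (al =? 0) || (al =? P) then (x, P - al)
  else ((N - 1 - fst x, - snd x), P - al).

Definition impA (a b : elt) : elt := negA (prodA a (negA b)).

Fixpoint powA (a : elt) (k : nat) : elt :=
  match k with
  | O => topA
  | S k' => prodA a (powA a k')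
  end.

Definition is_joinA (a b j : elt) : Prop :=
  inA j /\ leA a j /\ leA b j /\
  (forall u, inA u -> leA a u -> leA b u -> leA j u).

End Alg.

(* The radical is exactly the layer alpha = p, which is closed under the
   product, so no power of a radical element is bot.  A non-radical element lies
   below <(0,0),0> (if alpha = 0) or below <(n-1,0),p-1> (if 0 < alpha < p); the
   product is monotone, and the k-th powers of both bounds are <(min(n,k-1),0),0>
   as soon as k >= p, which is bot from k = n+1 on.  For k = n+1 (when p <= n) and
   k = p (when n < p) this gives (b) and (c).  For (a), the p-th power of a
   non-radical element has alpha = 0, so its negation, hence the join, is radical. *)

From Pilot Require Import Defs.
From Stdlib Require Import ZArith Lia Bool.
Open Scope Z_scope.

Lemma lexleb_true x y :
  lexleb x y = true <-> fst x < fst y \/ (fst x = fst y /\ snd x <= snd y).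
Proof.
  unfold lexleb. rewrite orb_true_iff, andb_true_iff, Z.ltb_lt, Z.eqb_eq, Z.leb_le.
  tauto.
Qed.

Lemma lexleb_false x y :
  lexleb x y = false <-> fst y < fst x \/ (fst x = fst y /\ snd y < snd x).
Proof.
  unfold lexleb. rewrite orb_false_iff, andb_false_iff, Z.ltb_ge, Z.eqb_neq, Z.leb_gt.
  lia.
Qed.

Lemma inA_cases n p m r al : inA n p ((m, r), al) ->
  (al = 0 /\ lexle (0, 0) (m, r) /\ lexle (m, r) (Z.of_nat n, 0)) \/
  (0 < al < Z.of_nat p /\ lexle (0, 0) (m, r) /\ lexle (m, r) (Z.of_nat n - 1, 0)) \/
  (al = Z.of_nat p /\ lexle (0, 0) (m, r) /\ lexle (m, r) (Z.of_nat n, 0)).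
Proof. unfold inA. intuition. Qed.

(* Within the layer alpha = 0 the order is reversed, and by (o3) an element
   <x,0> compares with the positive layers like <(n-1,0) - x, 1>. *)
Definition joinA (n : nat) (a b : elt) : elt :=
  let (x, al) := a in let (y, be) := b in
  if (al =? 0) && (be =? 0) then (pmin x y, 0)
  else if al =? 0 then (pmax y (psub (Z.of_nat n - 1, 0) x), be)
  else if be =? 0 then (pmax x (psub (Z.of_nat n - 1, 0) y), al)
  else (pmax x y, Z.max al be).

(* All operations are defined by finitely many linear case distinctions, so each
   identity or inequality between concrete elements is decided by splitting every
   test and calling [lia]. *)

Ltac split_inA :=
  repeat match goal with
  | H : inA _ _ ((_, _), ?al) |- _ =>
      apply inA_cases in H; destruct H as [[? [? ?]]|[[? [? ?]]|[? [? ?]]]]; try subst al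
  end.

Ltac split_leA :=
  repeat match goal with
  | H : leA _ ((_, _), _) ((_, _), _) |- _ =>
      unfold leA in H; destruct H as [[? [? ?]]|[[? [? ?]]|[? [? ?]]]]; try (exfalso; lia)
  end.

Ltac split_test :=
  match goal with
  | |- context [Z.ltb ?a ?b] => destruct (Z.ltb_spec a b)
  | |- context [Z.leb ?a ?b] => destruct (Z.leb_spec a b)
  | |- context [Z.eqb ?a ?b] => destruct (Z.eqb_spec a b)
  | H : context [Z.ltb ?a ?b] |- _ => destruct (Z.ltb_spec a b)
  | H : context [Z.leb ?a ?b] |- _ => destruct (Z.leb_spec a b)
  | H : context [Z.eqb ?a ?b] |- _ => destruct (Z.eqb_spec a b)
  end; cbn [fst snd andb orb] in *; try (exfalso; lia).

Ltac split_lex :=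
  match goal with
  | |- context [if lexleb ?x ?y then _ else _] => destruct (lexleb x y) eqn:?
  | H : context [if lexleb ?x ?y then _ else _] |- _ => destruct (lexleb x y) eqn:?
  end; cbn [fst snd andb orb] in *.

(* Disjunctive hypotheses are split only when [lia] fails without them, which
   avoids an exponential number of goals. *)
Ltac lazy_lia :=
  first
  [ solve [repeat match goal with H : _ \/ _ |- _ => clear H end; lia]
  | lazymatch goal with
    | H : _ \/ _ |- _ =>
        destruct H as [H|H]; repeat match goal with H : _ /\ _ |- _ => destruct H end;
        lazy_lia
    end ].

Ltac solve_alg :=
  unfold joinA, inA, leA, prodA, negA, lstar, limp, pmin, pmax, padd, psub, botA, topA in *;
  cbn [fst snd andb orb] in *;
  repeat split_test; repeat split_lex;
  unfold lexle in *; repeat rewrite lexleb_true in *; repeat rewrite lexleb_false in *;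
  cbn [fst snd] in *;
  repeat match goal with H : _ /\ _ |- _ => destruct H end;
  repeat match goal with |- (_, _) = (_, _) => f_equal end;
  lazy_lia.

Section Algebra.

Variables n p : nat.
Hypothesis n_ge1 : (1 <= n)%nat.
Hypothesis p_ge1 : (1 <= p)%nat.

Local Notation inA := (inA n p).
Local Notation leA := (leA n).
Local Notation prodA := (prodA n p).
Local Notation powA := (powA n p).
Local Notation negA := (negA n p).
Local Notation botA := (botA n).

(* [radA] generates the radical; [top0] and [topmid] are the greatest elements of
   the layer alpha = 0 and of the layers 0 < alpha < p. *)
Local Notation radA := ((0, 0), Z.of_nat p).
Local Notation top0 := ((0, 0), 0).
Local Notation topmid := ((Z.of_nat n - 1, 0), Z.of_nat p - 1).

Lemma topA_in : inA (topA n p).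
Proof. solve_alg. Qed.

Lemma prodA_in a b : inA a -> inA b -> inA (prodA a b).
Proof.
  intros ha hb. destruct a as [[m r] al], b as [[k s] be].
  split_inA; solve_alg.
Qed.

Lemma powA_in a k : inA a -> inA (powA a k).
Proof.
  intros ha. induction k as [|k IH]; cbn [Defs.powA].
  - exact topA_in.
  - exact (prodA_in _ _ ha IH).
Qed.

Lemma negA_in a : inA a -> inA (negA a).
Proof. intros ha. destruct a as [[m r] al]. split_inA; solve_alg. Qed.

Lemma leA_trans a b c : inA a -> inA b -> inA c -> leA a b -> leA b c -> leA a c.
Proof.
  intros ha hb hc hab hbc. destruct a as [[m r] al], b as [[k s] be], c as [[u v] ga].
  split_inA; split_leA; solve_alg.
Qed.

Lemma prodA_comm a b : prodA a b = prodA b a.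
Proof. destruct a as [[m r] al], b as [[k s] be]. solve_alg. Qed.

Lemma prodA_monol a b c : inA a -> inA b -> inA c ->
  leA a b -> leA (prodA a c) (prodA b c).
Proof.
  intros ha hb hc hab. destruct a as [[m r] al], b as [[k s] be], c as [[u v] ga].
  split_inA; split_leA; solve_alg.
Qed.

Lemma prodA_mono a b c d : inA a -> inA b -> inA c -> inA d ->
  leA a b -> leA c d -> leA (prodA a c) (prodA b d).
Proof.
  intros ha hb hc hd hab hcd.
  apply (leA_trans _ (prodA b c)); try apply prodA_in; auto using prodA_monol.
  rewrite (prodA_comm b c), (prodA_comm b d). auto using prodA_monol.
Qed.

Lemma powA_mono a b k : inA a -> inA b -> leA a b -> leA (powA a k) (powA b k).
Proof.
  intros ha hb hab. induction k as [|k IH]; cbn [Defs.powA].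
  - solve_alg.
  - apply prodA_mono; auto using powA_in.
Qed.

Lemma radA_le_iff a : inA a -> leA radA a <-> snd a = Z.of_nat p.
Proof. intros ha. destruct a as [[m r] al]. split_inA; split; intros; solve_alg. Qed.

Lemma powA_radical a k : snd a = Z.of_nat p -> snd (powA a k) = Z.of_nat p.
Proof.
  intros ha. induction k as [|k IH]; cbn [Defs.powA]; [reflexivity|].
  destruct a as [x al], (powA (x, al) k) as [y be]. cbn in *. subst.
  unfold Defs.prodA. repeat split_test. cbn. lia.
Qed.

Lemma le_top0 a : inA a -> snd a = 0 -> leA a top0.
Proof. intros ha hs. destruct a as [[m r] al]. cbn in hs. split_inA; solve_alg. Qed.

Lemma le_topmid a : inA a -> 0 < snd a < Z.of_nat p -> leA a topmid.
Proof. intros ha hs. destruct a as [[m r] al]. cbn in hs. split_inA; solve_alg. Qed.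

Lemma powA_top0 k : powA top0 (S k) = ((Z.min (Z.of_nat n) (Z.of_nat k), 0), 0).
Proof.
  induction k as [|k IH]; cbn [Defs.powA] in *; [|rewrite IH]; solve_alg.
Qed.

Lemma powA_topmid_low k : (k <= p - 1)%nat ->
  powA topmid k = ((Z.max 0 (Z.of_nat n - Z.of_nat k), 0), Z.of_nat p - Z.of_nat k).
Proof.
  induction k as [|k IH]; intros hk; cbn [Defs.powA].
  - unfold topA. f_equal; f_equal; lia.
  - rewrite IH by lia. solve_alg.
Qed.

Lemma powA_topmid_high j : (2 <= p)%nat ->
  powA topmid (p + j) = ((Z.min (Z.of_nat n) (Z.of_nat p - 1 + Z.of_nat j), 0), 0).
Proof.
  intros p_ge2. induction j as [|j IH].
  - replace (p + 0)%nat with (S (p - 1)) by lia. cbn [Defs.powA].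
    rewrite powA_topmid_low by lia. solve_alg.
  - rewrite Nat.add_succ_r. cbn [Defs.powA]. rewrite IH. solve_alg.
Qed.

Lemma leA_layer0_snd u x : inA u -> leA u (x, 0) -> snd u = 0.
Proof. intros hu h. destruct u as [[m r] al], x as [t s]. split_inA; solve_alg. Qed.

Lemma powA_nonradical_le a k : inA a -> snd a < Z.of_nat p -> (p <= S k)%nat ->
  leA (powA a (S k)) ((Z.min (Z.of_nat n) (Z.of_nat k), 0), 0).
Proof.
  intros ha hs hk. destruct a as [[m r] al]. cbn in hs.
  assert (al = 0 \/ 0 < al < Z.of_nat p) as [h0|hmid].
  { apply inA_cases in ha. lia. }
  - rewrite <- powA_top0. apply powA_mono; auto using le_top0. solve_alg.
  - assert (he : powA topmid (S k) = ((Z.min (Z.of_nat n) (Z.of_nat k), 0), 0)).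
    { replace (S k) with (p + (S k - p))%nat by lia.
      rewrite powA_topmid_high by lia. do 3 f_equal; lia. }
    rewrite <- he. apply powA_mono; auto using le_topmid. solve_alg.
Qed.

Lemma nonradical_iff_powA_bot a k : (n <= k)%nat -> (p <= S k)%nat -> inA a ->
  ~ leA radA a <-> powA a (S k) = botA.
Proof.
  intros hnk hpk ha. rewrite radA_le_iff by exact ha. split.
  - intros hnr.
    assert (hs : snd a < Z.of_nat p).
    { destruct a as [[m r] al]. apply inA_cases in ha. cbn in *. lia. }
    pose proof (powA_nonradical_le a k ha hs hpk) as hle.
    rewrite Z.min_l in hle by lia.
    pose proof (powA_in a (S k) ha) as hin. destruct (powA a (S k)) as [[m r] al].
    split_inA; solve_alg.
  - intros hbot hr. apply (powA_radical a (S k)) in hr. rewrite hbot in hr.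
    unfold Defs.botA in hr. cbn in hr. lia.
Qed.

Lemma powA_topmid_pred : (n < p)%nat -> powA topmid (p - 1) = negA topmid.
Proof. intros hnp. rewrite powA_topmid_low by lia. solve_alg. Qed.

Lemma joinA_is_join a b : inA a -> inA b -> is_joinA n p a b (joinA n a b).
Proof.
  intros ha hb. destruct a as [[m r] al], b as [[k s] be].
  unfold is_joinA. split; [|split; [|split]].
  1-3: split_inA; solve_alg.
  intros [[u v] ga] hu h1 h2. split_inA; split_leA; solve_alg.
Qed.

Lemma joinA_radical a b : inA a -> inA b ->
  snd a = Z.of_nat p \/ snd b = Z.of_nat p -> snd (joinA n a b) = Z.of_nat p.
Proof.
  intros ha hb h. destruct a as [[m r] al], b as [[k s] be]. cbn in h.
  split_inA; unfold joinA; repeat split_test; cbn; lia.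
Qed.

Lemma join_negA_powA_radical a : inA a -> leA radA (joinA n a (negA (powA a p))).
Proof.
  intros ha.
  assert (hneg : inA (negA (powA a p))) by auto using negA_in, powA_in.
  apply radA_le_iff; [apply joinA_is_join; auto|]. apply joinA_radical; auto.
  destruct (Z.eq_dec (snd a) (Z.of_nat p)) as [hr|hnr]; [now left|right].
  assert (hs : snd a < Z.of_nat p).
  { destruct a as [[m r] al]. apply inA_cases in ha. cbn in *. lia. }
  assert (hpow : snd (powA a p) = 0).
  { replace (powA a p) with (powA a (S (p - 1))) by (f_equal; lia).
    eapply leA_layer0_snd; [apply powA_in, ha|]. apply powA_nonradical_le; auto; lia. }
  destruct (powA a p) as [x al]. cbn in hpow. subst al. unfold Defs.negA. cbn. lia.
Qed.

End Algebra.

Theorem theorem3p4 (n p : nat) (hn : (1 <= n)%nat) (hp : (1 <= p)%nat) :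
  (* (a) *)
  (forall a, inA n p a ->
     exists j, is_joinA n p a (negA n p (powA n p a p)) j /\
               leA n ((0, 0), Z.of_nat p) j) /\
  (* (b) *)
  ((p <= n)%nat ->
     forall a, inA n p a ->
       (~ leA n ((0, 0), Z.of_nat p) a <-> powA n p a (n + 1) = botA n)) /\
  (* (c) *)
  ((n < p)%nat ->
     powA n p ((Z.of_nat n - 1, 0), Z.of_nat p - 1) (p - 1)
       = negA n p ((Z.of_nat n - 1, 0), Z.of_nat p - 1) /\
     forall a, inA n p a ->
       (~ leA n ((0, 0), Z.of_nat p) a <-> powA n p a p = botA n)).
Proof.
  split; [|split].
  - intros a ha. exists (joinA n a (negA n p (powA n p a p))). split.
    + apply joinA_is_join; auto using negA_in, powA_in.
    + exact (join_negA_powA_radical n p hn hp a ha).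
  - intros hpn a ha. rewrite Nat.add_1_r.
    apply nonradical_iff_powA_bot; auto; lia.
  - intros hnp. split; [exact (powA_topmid_pred n p hn hp hnp)|].
    intros a ha. destruct p as [|q]; [lia|].
    apply nonradical_iff_powA_bot; auto; lia.
Qed.
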